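(* Let $\mathbb{E}$ be a finitely complete category, $\Sigma$ a fibrational class of split epimorphisms, and suppose $\mathbb{E}$ is a $\Sigma$-Mal'tsev category. If a monomorphism $m\colon U\rightarrowtail X$ is normal to a $\Sigma$-equivalence relation $S$ on $X$, then the object $U$ is $\Sigma$-special. If moreover $\mathbb{E}$ is $\Sigma$-protomodular, then a monomorphism $m$ is normal to at most one $\Sigma$-equivalence relation.
   Context: A split epimorphism is a pair $(f,s)$ with $fs=1$. A class $\Sigma$ of split epimorphisms is fibrational if it contains all split epimorphisms $(f,s)$ with $f$ invertible and is stable under pullback along any morphism. A pair of morphisms with common codomain $Z$ is jointly extremally epic if it factors jointly through no non-invertible monomorphism into $Z$. $\mathbb{E}$ is $\Sigma$-Mal'tsev if for every split epimorphism $(f,s)\colon X\rightleftarrows Y$ in $\Sigma$ and every split epimorphism $(g,t)$ with $g\colon Y'\to Y$, letting $X'=Y'\times_YX$, $s'=(1_{Y'},sg)$, $\bar t=(tf,1_X)$, the pair $(s',\bar t)$ is jointly extremally epic. A $\Sigma$-relation is a reflexive relation $(d_0,d_1)\colon S\rightarrowtail X\times X$ with reflexivity $s_0$ such that $(d_0,s_0)\in\Sigma$; a $\Sigma$-equivalence relation is an equivalence relation which is a $\Sigma$-relation. An object $U$ is $\Sigma$-special when the kernel relation of $U\to 1$, namely $U\times U$ with its projections and the diagonal, is a $\Sigma$-relation. A monomorphism $m\colon U\rightarrowtail X$ is normal to an equivalence relation $S$ on $X$ when $m^{-1}(S)=U\times U$ (the indiscrete relation) and both commutative squares $d_i^S\circ\tilde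 m=m\circ p_i$ ($i=0,1$), where $\tilde m\colon U\times U\to S$ is the induced morphism, are pullbacks. A split epimorphism $(f,s)\colon X\rightleftarrows Y$ is strongly split when for every morphism $y\colon\bar Y\to Y$, with $x\colon\bar Y\times_YX\to X$ the pullback projection, the pair $(x,s)$ is jointly extremally epic; $\mathbb{E}$ is $\Sigma$-protomodular when every split epimorphism in $\Sigma$ is strongly split. *)

Set Implicit Arguments.
Unset Strict Implicit.

Record Category := {
  Ob :> Type;
  Hom : Ob -> Ob -> Type;
  idm : forall X : Ob, Hom X X;
  comp : forall X Y Z : Ob, Hom Y Z -> Hom X Y -> Hom X Z;
  comp_assoc : forall (W X Y Z : Ob) (h : Hom Y Z) (g : Hom X Y) (f : Hom W X),
      comp h (comp g f) = comp (comp h g) f;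
  comp_id_l : forall (X Y : Ob) (f : Hom X Y), comp (idm Y) f = f;
  comp_id_r : forall (X Y : Ob) (f : Hom X Y), comp f (idm X) = f
}.

Arguments idm {c} X.
Arguments comp {c X Y Z} _ _.
Arguments Hom {c} _ _.
Notation "g \o f" := (comp g f) (at level 40, left associativity).

Section Cat.
Variable C : Category.

Definition is_mono {U X : C} (m : Hom U X) : Prop :=
  forall (T : C) (a b : Hom T U), m \o a = m \o b -> a = b.

Definition is_iso {X Y : C} (f : Hom X Y) : Prop :=
  exists g : Hom Y X, g \o f = idm X /\ f \o g = idm Y.

Definition is_terminal (T : C) : Prop :=
  forall X : C, exists f : Hom X T, forall g : Hom X T, g = f.

Definition is_pullback {X Y Z P : C} (f : Hom X Z) (g : Hom Y Z)
    (p1 : Hom P X) (p2 : Hom P Y) : Prop :=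
  f \o p1 = g \o p2 /\
  forall (Q : C) (q1 : Hom Q X) (q2 : Hom Q Y), f \o q1 = g \o q2 ->
    exists u : Hom Q P, p1 \o u = q1 /\ p2 \o u = q2 /\
      forall v : Hom Q P, p1 \o v = q1 -> p2 \o v = q2 -> v = u.

Definition is_product {X Y P : C} (p0 : Hom P X) (p1 : Hom P Y) : Prop :=
  forall (Q : C) (q0 : Hom Q X) (q1 : Hom Q Y),
    exists u : Hom Q P, p0 \o u = q0 /\ p1 \o u = q1 /\
      forall v : Hom Q P, p0 \o v = q0 -> p1 \o v = q1 -> v = u.

Definition finitely_complete : Prop :=
  (exists T : C, is_terminal T) /\
  (forall (X Y Z : C) (f : Hom X Z) (g : Hom Y Z),
     exists (P : C) (p1 : Hom P X) (p2 : Hom P Y), is_pullback f g p1 p2).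

Definition split_class (Sigma : forall X Y : C, Hom X Y -> Hom Y X -> Prop) : Prop :=
  forall (X Y : C) (f : Hom X Y) (s : Hom Y X), Sigma X Y f s -> f \o s = idm Y.

Definition fibrational (Sigma : forall X Y : C, Hom X Y -> Hom Y X -> Prop) : Prop :=
  (forall (X Y : C) (f : Hom X Y) (s : Hom Y X),
      f \o s = idm Y -> is_iso f -> Sigma X Y f s) /\
  (forall (X Y Y' X' : C) (f : Hom X Y) (s : Hom Y X) (h : Hom Y' Y)
          (f' : Hom X' Y') (h' : Hom X' X) (s' : Hom Y' X'),
      Sigma X Y f s ->
      is_pullback h f f' h' ->
      f' \o s' = idm Y' -> h' \o s' = s \o h ->
      Sigma X' Y' f' s').

Definition jointly_extremally_epic {A B Z : C} (a : Hom A Z) (b : Hom B Z) : Prop :=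
  forall (M : C) (m : Hom M Z), is_mono m ->
    (exists a' : Hom A M, m \o a' = a) ->
    (exists b' : Hom B M, m \o b' = b) ->
    is_iso m.

(* Sigma-Mal'tsev: X' = Y' x_Y X (pullback of f along g, projections
   f' : X' -> Y', g' : X' -> X), s' = (1, s g), tbar = (t f, 1). *)
Definition Sigma_Maltsev (Sigma : forall X Y : C, Hom X Y -> Hom Y X -> Prop) : Prop :=
  forall (X Y Y' X' : C) (f : Hom X Y) (s : Hom Y X) (g : Hom Y' Y) (t : Hom Y Y')
         (f' : Hom X' Y') (g' : Hom X' X) (s' : Hom Y' X') (tbar : Hom X X'),
    Sigma X Y f s ->
    g \o t = idm Y ->
    is_pullback g f f' g' ->
    f' \o s' = idm Y' -> g' \o s' = s \o g ->
    f' \o tbar = t \o f -> g' \o tbar = idm X ->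
    jointly_extremally_epic s' tbar.

Definition strongly_split {X Y : C} (f : Hom X Y) (s : Hom Y X) : Prop :=
  forall (Yb P : C) (y : Hom Yb Y) (p : Hom P Yb) (x : Hom P X),
    is_pullback y f p x -> jointly_extremally_epic x s.

Definition Sigma_protomodular (Sigma : forall X Y : C, Hom X Y -> Hom Y X -> Prop) : Prop :=
  forall (X Y : C) (f : Hom X Y) (s : Hom Y X), Sigma X Y f s -> strongly_split f s.

(* Relations on X: jointly monic pairs (d0, d1) : S -> X with a
   reflexivity s0.  Internal symmetry / transitivity are expressed on
   generalized elements (the usual representable definition). *)
Record relation (X : C) := {
  rel_ob : C;
  d0 : Hom rel_ob X;
  d1 : Hom rel_ob X;
  s0 : Hom X rel_ob
}.

Definition related {X : C} (S : relation X) {T : C} (a b : Hom T X) : Prop :=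
  exists h : Hom T (rel_ob S), d0 S \o h = a /\ d1 S \o h = b.

Definition is_reflexive_relation {X : C} (S : relation X) : Prop :=
  (forall (T : C) (h k : Hom T (rel_ob S)),
      d0 S \o h = d0 S \o k -> d1 S \o h = d1 S \o k -> h = k) /\
  d0 S \o s0 S = idm X /\ d1 S \o s0 S = idm X.

Definition is_equivalence_relation {X : C} (S : relation X) : Prop :=
  is_reflexive_relation S /\
  (forall (T : C) (a b : Hom T X), related S a b -> related S b a) /\
  (forall (T : C) (a b c : Hom T X),
      related S a b -> related S b c -> related S a c).

Definition Sigma_relation (Sigma : forall X Y : C, Hom X Y -> Hom Y X -> Prop)
    {X : C} (S : relation X) : Prop :=
  is_reflexive_relation S /\ Sigma _ _ (d0 S) (s0 S).

Definition Sigma_equivalence_relation (Sigma : forall X Y : C, Hom X Y -> Hom Y X -> Prop)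
    {X : C} (S : relation X) : Prop :=
  is_equivalence_relation S /\ Sigma_relation Sigma S.

(* U is Sigma-special: the kernel relation of U -> 1, i.e. U x U with its
   projections and the diagonal, is a Sigma-relation (for any choice of
   the product). *)
Definition Sigma_special (Sigma : forall X Y : C, Hom X Y -> Hom Y X -> Prop) (U : C) : Prop :=
  forall (P : C) (p0 p1 : Hom P U) (delta : Hom U P),
    is_product p0 p1 -> p0 \o delta = idm U -> p1 \o delta = idm U ->
    Sigma_relation Sigma (Build_relation p0 p1 delta).

(* m : U >-> X is normal to S: m^{-1}(S) is the indiscrete relation U x U,
   i.e. there is mt : U x U -> S with d_i mt = m p_i, and both squares
   d_i mt = m p_i are pullbacks. *)
Definition normal_to {U X : C} (m : Hom U X) (S : relation X) : Prop :=
  exists (P : C) (p0 p1 : Hom P U) (mt : Hom P (rel_ob S)),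
    is_product p0 p1 /\
    d0 S \o mt = m \o p0 /\ d1 S \o mt = m \o p1 /\
    is_pullback (d0 S) m mt p0 /\ is_pullback (d1 S) m mt p1.

Definition same_relation {X : C} (S S' : relation X) : Prop :=
  exists phi : Hom (rel_ob S) (rel_ob S'),
    is_iso phi /\ d0 S' \o phi = d0 S /\ d1 S' \o phi = d1 S.

End Cat.


(* The square [d0 mt = m p0] of a normal monomorphism exhibits the split
   epimorphism (p0, diagonal) of [U x U] as the pullback of (d0, s0) along [m];
   by fibrationality it lies in Sigma, which is what it means for [U] to be
   Sigma-special.  Under protomodularity (d0, s0) is strongly split, so [S] is
   generated, as a subobject, by [mt] and [s0]; both factor through any other
   reflexive relation [S'] to which [m] is normal, hence [S <= S'], and
   symmetrically [S' <= S]. *)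

Ltac simpl_comp :=
  repeat rewrite comp_assoc; repeat rewrite comp_id_l; repeat rewrite comp_id_r.

Section Limits.
Context {C : Category}.

Definition jointly_monic {P X Y : C} (a : Hom P X) (b : Hom P Y) : Prop :=
  forall (T : C) (h k : Hom T P), a \o h = a \o k -> b \o h = b \o k -> h = k.

Lemma pullback_sym {X Y Z P : C} {f : Hom X Z} {g : Hom Y Z} {p1 : Hom P X} {p2 : Hom P Y} :
  is_pullback f g p1 p2 -> is_pullback g f p2 p1.
Proof.
  intros [E H]; split; [now symmetry|].
  intros Q q1 q2 Eq. destruct (H Q q2 q1 (eq_sym Eq)) as [u [H1 [H2 H3]]].
  exists u; split; [|split]; auto.
Qed.

Lemma product_jointly_monic {X Y P : C} {p0 : Hom P X} {p1 : Hom P Y} :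
  is_product p0 p1 -> jointly_monic p0 p1.
Proof.
  intros H Q u v E0 E1. destruct (H Q (p0 \o u) (p1 \o u)) as [w [_ [_ Hw]]].
  rewrite (Hw u eq_refl eq_refl). symmetry. apply Hw; auto.
Qed.

Lemma pullback_jointly_monic {X Y Z P : C} {f : Hom X Z} {g : Hom Y Z}
    {p1 : Hom P X} {p2 : Hom P Y} :
  is_pullback f g p1 p2 -> jointly_monic p1 p2.
Proof.
  intros [E H] Q u v E1 E2.
  destruct (H Q (p1 \o u) (p2 \o u)) as [w [_ [_ Hw]]].
  - rewrite !comp_assoc, E. reflexivity.
  - rewrite (Hw u eq_refl eq_refl). symmetry. apply Hw; auto.
Qed.

Lemma pullback_mono {X Y Z P : C} {f : Hom X Z} {g : Hom Y Z}
    {p1 : Hom P X} {p2 : Hom P Y} :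
  is_pullback f g p1 p2 -> is_mono g -> is_mono p1.
Proof.
  intros Pb Mg Q h k E1. apply (pullback_jointly_monic Pb); auto.
  apply Mg. destruct Pb as [E _]. rewrite !comp_assoc, <- E, <- !comp_assoc, E1.
  reflexivity.
Qed.

Lemma pairing_mono {X Y P R : C} {p0 : Hom P X} {p1 : Hom P Y}
    {a : Hom R X} {b : Hom R Y} {e : Hom R P} :
  jointly_monic a b -> p0 \o e = a -> p1 \o e = b -> is_mono e.
Proof.
  intros Hab E0 E1 T h k Ehk. apply Hab.
  - rewrite <- E0, <- !comp_assoc, Ehk. reflexivity.
  - rewrite <- E1, <- !comp_assoc, Ehk. reflexivity.
Qed.

Lemma iso_pullback_id {X X' Y : C} (f : Hom X Y) {phi : Hom X' X} :
  is_iso phi -> is_pullback (idm Y) f (f \o phi) phi.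
Proof.
  intros [psi [Hl Hr]]. split; [now rewrite comp_id_l|].
  intros Q q1 q2 Eq. rewrite comp_id_l in Eq. exists (psi \o q2). split; [|split].
  - rewrite <- comp_assoc, (comp_assoc phi), Hr, comp_id_l. now symmetry.
  - now rewrite comp_assoc, Hr, comp_id_l.
  - intros v _ Ev. now rewrite <- Ev, comp_assoc, Hl, comp_id_l.
Qed.

Lemma terminal_pullback_product {X Y T P : C} {tX : Hom X T} {tY : Hom Y T}
    {p0 : Hom P X} {p1 : Hom P Y} :
  is_terminal T -> is_pullback tX tY p0 p1 -> is_product p0 p1.
Proof.
  intros HT [_ H] Q q0 q1. destruct (HT Q) as [tQ HtQ].
  apply H. now rewrite (HtQ (tX \o q0)), (HtQ (tY \o q1)).
Qed.

Lemma finitely_complete_product (X Y : C) :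
  finitely_complete C -> exists (P : C) (p0 : Hom P X) (p1 : Hom P Y), is_product p0 p1.
Proof.
  intros [[T HT] Hpb]. destruct (HT X) as [tX _]. destruct (HT Y) as [tY _].
  destruct (Hpb _ _ _ tX tY) as [P [p0 [p1 Pb]]].
  exists P, p0, p1. exact (terminal_pullback_product HT Pb).
Qed.

Lemma product_comparison_iso {X Y P Q : C} {p0 : Hom P X} {p1 : Hom P Y}
    {q0 : Hom Q X} {q1 : Hom Q Y} :
  is_product p0 p1 -> is_product q0 q1 ->
  exists phi : Hom P Q, is_iso phi /\ q0 \o phi = p0 /\ q1 \o phi = p1.
Proof.
  intros HP HQ.
  destruct (HQ P p0 p1) as [phi [F0 [F1 _]]].
  destruct (HP Q q0 q1) as [psi [G0 [G1 _]]].
  exists phi. split; [|split; assumption].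
  exists psi. split.
  - apply (product_jointly_monic HP); simpl_comp; rewrite ?G0, ?G1; assumption.
  - apply (product_jointly_monic HQ); simpl_comp; rewrite ?F0, ?F1; assumption.
Qed.

Lemma relation_meet {X : C} (S S' : relation X) :
  finitely_complete C -> jointly_monic (d0 S') (d1 S') ->
  exists (I : C) (a : Hom I (rel_ob S)) (b : Hom I (rel_ob S')),
    is_mono a /\ d0 S \o a = d0 S' \o b /\ d1 S \o a = d1 S' \o b /\
    forall (Q : C) (x : Hom Q (rel_ob S)), related S' (d0 S \o x) (d1 S \o x) ->
      exists u : Hom Q I, a \o u = x.
Proof.
  intros fc HS'.
  destruct (finitely_complete_product X X fc) as [XX [pi0 [pi1 HXX]]].
  destruct (HXX _ (d0 S) (d1 S)) as [e [e0 [e1 _]]].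
  destruct (HXX _ (d0 S') (d1 S')) as [e' [e0' [e1' _]]].
  destruct (proj2 fc _ _ _ e e') as [I [a [b Pb]]].
  assert (A0 : d0 S \o a = d0 S' \o b).
  { rewrite <- e0, <- e0', <- !comp_assoc. now rewrite (proj1 Pb). }
  assert (A1 : d1 S \o a = d1 S' \o b).
  { rewrite <- e1, <- e1', <- !comp_assoc. now rewrite (proj1 Pb). }
  exists I, a, b. split; [|split; [|split]]; auto.
  - exact (pullback_mono Pb (pairing_mono HS' e0' e1')).
  - intros Q x [y [Y0 Y1]]. destruct (proj2 Pb Q x y) as [u [U0 _]].
    + apply (product_jointly_monic HXX); simpl_comp; rewrite ?e0, ?e0', ?e1, ?e1'; auto.
    + exists u; exact U0.
Qed.

Lemma related_of_jointly_extremally_epic {X A B : C} {S S' : relation X}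
    {x : Hom A (rel_ob S)} {z : Hom B (rel_ob S)} :
  finitely_complete C -> jointly_monic (d0 S') (d1 S') ->
  jointly_extremally_epic x z ->
  related S' (d0 S \o x) (d1 S \o x) -> related S' (d0 S \o z) (d1 S \o z) ->
  related S' (d0 S) (d1 S).
Proof.
  intros fc HS' Jee Rx Rz.
  destruct (relation_meet S S' fc HS') as [I [a [b [Ma [A0 [A1 Fa]]]]]].
  destruct (Jee I a Ma (Fa _ x Rx) (Fa _ z Rz)) as [ai [_ Hai]].
  exists (b \o ai). simpl_comp.
  rewrite <- A0, <- A1, <- !comp_assoc, Hai, !comp_id_r. now split.
Qed.

Lemma same_relation_of_related {X : C} (S S' : relation X) :
  jointly_monic (d0 S) (d1 S) -> jointly_monic (d0 S') (d1 S') ->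
  related S' (d0 S) (d1 S) -> related S (d0 S') (d1 S') -> same_relation S S'.
Proof.
  intros HS HS' [phi [P0 P1]] [psi [Q0 Q1]].
  exists phi. split; [|split; assumption].
  exists psi. split.
  - apply HS; simpl_comp; rewrite ?Q0, ?Q1; assumption.
  - apply HS'; simpl_comp; rewrite ?P0, ?P1; assumption.
Qed.

End Limits.

Section SigmaSpecial.
Context {C : Category} {Sigma : forall X Y : C, Hom X Y -> Hom Y X -> Prop}.
Hypothesis Sigma_split : split_class Sigma.
Hypothesis Sigma_fibrational : fibrational Sigma.

Lemma Sigma_iso_closed {X X' Y : C} {f : Hom X Y} (s : Hom Y X)
    {phi : Hom X' X} {s' : Hom Y X'} :
  Sigma X Y f s -> is_iso phi -> phi \o s' = s -> Sigma X' Y (f \o phi) s'.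
Proof.
  intros Hfs Iphi Es.
  apply (proj2 Sigma_fibrational _ _ _ _ f s (idm Y) (f \o phi) phi s' Hfs).
  - exact (iso_pullback_id f Iphi).
  - rewrite <- comp_assoc, Es. exact (Sigma_split _ _ _ _ Hfs).
  - now rewrite Es, comp_id_r.
Qed.

Lemma Sigma_normal_diagonal {U X P : C} {m : Hom U X} {S : relation X}
    {p0 p1 : Hom P U} {mt : Hom P (rel_ob S)} {delta : Hom U P} :
  Sigma_relation Sigma S ->
  d0 S \o mt = m \o p0 -> d1 S \o mt = m \o p1 -> is_pullback (d0 S) m mt p0 ->
  p0 \o delta = idm U -> p1 \o delta = idm U -> Sigma P U p0 delta.
Proof.
  intros [[HS [R0 R1]] HSig] E0 E1 Pb D0 D1.
  apply (proj2 Sigma_fibrational _ _ _ _ _ _ m p0 mt delta HSig (pullback_sym Pb) D0).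
  apply HS; simpl_comp.
  - rewrite E0, R0, <- comp_assoc, D0. now simpl_comp.
  - rewrite E1, R1, <- comp_assoc, D1. now simpl_comp.
Qed.

Lemma normal_Sigma_special {U X : C} {m : Hom U X} {S : relation X} :
  Sigma_relation Sigma S -> normal_to m S -> Sigma_special Sigma U.
Proof.
  intros HS [P' [q0 [q1 [mt [HP' [E0 [E1 [Pb0 _]]]]]]]] P p0 p1 delta HP D0 D1.
  split; [split; [exact (product_jointly_monic HP) | split; assumption]|]. simpl.
  destruct (product_comparison_iso HP HP') as [phi [Iphi [F0 F1]]].
  rewrite <- F0. apply (Sigma_iso_closed (phi \o delta)); auto.
  apply (Sigma_normal_diagonal HS E0 E1 Pb0); auto;
    rewrite comp_assoc; [rewrite F0 | rewrite F1]; assumption.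
Qed.

End SigmaSpecial.

Lemma normal_related {C : Category} {Sigma : forall X Y : C, Hom X Y -> Hom Y X -> Prop}
    {U X : C} {m : Hom U X} {S S' : relation X} :
  finitely_complete C -> Sigma_protomodular Sigma ->
  Sigma_relation Sigma S -> is_reflexive_relation S' ->
  normal_to m S -> normal_to m S' -> related S' (d0 S) (d1 S).
Proof.
  intros fc prot [[_ [R0 R1]] HSig] [HS' [R0' R1']]
    [P [p0 [p1 [mt [HP [E0 [E1 [Pb0 _]]]]]]]] [P' [q0 [q1 [mt' [HP' [E0' [E1' _]]]]]]].
  apply (related_of_jointly_extremally_epic fc HS'
           (prot _ _ _ _ HSig U P m p0 mt (pullback_sym Pb0))).
  - destruct (product_comparison_iso HP HP') as [psi [_ [Ps0 Ps1]]].
    exists (mt' \o psi). simpl_comp.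
    rewrite E0, E1, E0', E1', <- !comp_assoc, Ps0, Ps1. now split.
  - exists (s0 S'). now rewrite R0, R1, R0', R1'.
Qed.

Theorem proposition8p5 (C : Category)
  (Sigma : forall X Y : C, Hom X Y -> Hom Y X -> Prop) :
  finitely_complete C ->
  split_class Sigma ->
  fibrational Sigma ->
  Sigma_Maltsev Sigma ->
  (forall (U X : C) (m : Hom U X) (S : relation X),
      is_mono m ->
      Sigma_equivalence_relation Sigma S ->
      normal_to m S ->
      Sigma_special Sigma U) /\
  (Sigma_protomodular Sigma ->
   forall (U X : C) (m : Hom U X) (S S' : relation X),
      is_mono m ->
      Sigma_equivalence_relation Sigma S ->
      Sigma_equivalence_relation Sigma S' ->
      normal_to m S -> normal_to m S' ->
      same_relation S S').
Proof.
  intros fc Hsplit Hfib _. split.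
  - intros U X m S _ [_ HS] N. exact (normal_Sigma_special Hsplit Hfib HS N).
  - intros prot U X m S S' _ [_ HS] [_ HS'] N N'.
    apply same_relation_of_related.
    + exact (proj1 (proj1 HS)).
    + exact (proj1 (proj1 HS')).
    + exact (normal_related fc prot HS (proj1 HS') N N').
    + exact (normal_related fc prot HS' (proj1 HS) N' N).
Qed.
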